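(* Let $m,n\ge0$ and let $\mathit{TS}_i=(\mathcal{S}_i,\mathcal{E}_i,\mathcal{I}_i,\to_i)$, $1\le i\le m+n$, be LTSs. Let $\psi\subseteq\mathcal{E}_1^\omega\times\cdots\times\mathcal{E}_{m+n}^\omega$ be an $(m+n)$-ary safety relation. If $(\mathcal{I}_1,\ldots,\mathcal{I}_{m+n},\psi)\in\texttt{hyco}^{m,n}$, then for all $\tau_1\in\mathit{Traces}(\mathcal{I}_1),\ldots,\tau_m\in\mathit{Traces}(\mathcal{I}_m)$ there exist $\tau_{m+1}\in\mathit{Traces}(\mathcal{I}_{m+1}),\ldots,\tau_{m+n}\in\mathit{Traces}(\mathcal{I}_{m+n})$ with $(\tau_1,\ldots,\tau_{m+n})\in\psi$.
   Context: LTS $(\mathcal{S},\mathcal{E},\mathcal{I},\to)$: states, observable events, initial state, and $\to\subseteq\mathcal{S}\times(\mathcal{E}\cup\{\emptyset\})\times\mathcal{S}$, label $\emptyset$ marking silent steps. $\to^*$ is the reflexive transitive closure of silent steps; for $e\in\mathcal{E}$, $s\overset{e}{\rightsquigarrow}s'$ means $s\to^*s''\xrightarrow{e}s'$ for some $s''$. $\mathit{Traces}(s)$ is the set of $\tau\in\mathcal{E}^\omega$ such that some $\pi\in\mathcal{S}^\omega$ has $\pi_0=s$ and $\pi_i\overset{\tau[i]}{\rightsquigarrow}\pi_{i+1}$ for all $i$. For a $k$-ary trace relation $\psi$, its safety closure is $|\psi|_{\mathit{safe}}=\{(\tau_1,\ldots,\tau_k)\mid\forall n.\exists\tau_1',\ldots,\tau_k'.(\tau_1[0..n)\tau_1',\ldots,\tau_k[0..n)\tau_k')\in\psi\}$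 ($\tau[0..n)$ the prefix of length $n$), and $\psi$ is a safety relation iff $|\psi|_{\mathit{safe}}\subseteq\psi$. Derivative: $\Delta_{e_1,\ldots,e_k}(\psi)=\{(\tau_1,\ldots,\tau_k)\mid(e_1\tau_1,\ldots,e_k\tau_k)\in\psi\}$. $\texttt{hyco}^{m,n}\subseteq\mathcal{S}_1\times\cdots\times\mathcal{S}_{m+n}\times\mathcal{P}(\mathcal{E}_1^\omega\times\cdots\times\mathcal{E}_{m+n}^\omega)$ is the greatest fixed point of the monotone operator $\texttt{hycoF}^{m,n}(R)=\{(s_1,\ldots,s_{m+n},\psi)\mid\forall s_1\overset{e_1}{\rightsquigarrow}s_1'\ldots\forall s_m\overset{e_m}{\rightsquigarrow}s_m',\ \exists s_{m+1}\overset{e_{m+1}}{\rightsquigarrow}s_{m+1}'\ldots\exists s_{m+n}\overset{e_{m+n}}{\rightsquigarrow}s_{m+n}',\ \Delta_{e_1,\ldots,e_{m+n}}(\psi)\neq\emptyset\wedge(s_1',\ldots,s_{m+n}',\Delta_{e_1,\ldots,e_{m+n}}(\psi))\in R\}$ (each transition in system $i$ is in $\mathit{TS}_i$). *)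

From mathcomp Require Import all_boot.
From Stdlib Require Import Relations.

Set Implicit Arguments.
Unset Strict Implicit.
Unset Printing Implicit Defensive.

(* A labelled transition system (S, E, I, ->); silent steps carry label None. *)
Record LTS := {
  St : Type;
  Ev : Type;
  init : St;
  step : St -> option Ev -> St -> Prop
}.

Definition silent_star (L : LTS) : St L -> St L -> Prop :=
  clos_refl_trans (St L) (fun s s' => step s None s').

Definition wstep (L : LTS) (s : St L) (e : Ev L) (s' : St L) : Prop :=
  exists s'', silent_star s s'' /\ step s'' (Some e) s'.

Definition Traces (L : LTS) (s : St L) (tau : nat -> Ev L) : Prop :=
  exists pi : nat -> St L, pi 0 = s /\ forall i, wstep (pi i) (tau i) (pi i.+1).

Definition ttuple k (TS : 'I_k -> LTS) := forall i : 'I_k, nat -> Ev (TS i).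
Definition trel k (TS : 'I_k -> LTS) := ttuple TS -> Prop.

Definition prefix_cat (E : Type) (n : nat) (tau tau' : nat -> E) : nat -> E :=
  fun j => if j < n then tau j else tau' (j - n).

Definition safe_closure k (TS : 'I_k -> LTS) (psi : trel TS) : trel TS :=
  fun tau => forall n, exists tau' : ttuple TS,
      psi (fun i => prefix_cat n (tau i) (tau' i)).

Definition safety_rel k (TS : 'I_k -> LTS) (psi : trel TS) : Prop :=
  forall tau, safe_closure psi tau -> psi tau.

Definition scons (E : Type) (e : E) (tau : nat -> E) : nat -> E :=
  fun j => match j with 0 => e | j'.+1 => tau j' end.

Definition deriv k (TS : 'I_k -> LTS) (e : forall i, Ev (TS i)) (psi : trel TS)
  : trel TS := fun tau => psi (fun i => scons (e i) (tau i)).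

Definition rel_nonempty k (TS : 'I_k -> LTS) (psi : trel TS) : Prop :=
  exists tau, psi tau.

Definition join (m n : nat) (F : 'I_(m + n) -> Type)
  (a : forall i : 'I_m, F (lshift n i)) (b : forall j : 'I_n, F (rshift m j))
  : forall i : 'I_(m + n), F i :=
  fun i => eq_rect _ F
    (match split i as u return F (unsplit u) with
     | inl k => a k
     | inr k => b k
     end) i (splitK i).

Definition hycoF (m n : nat) (TS : 'I_(m + n) -> LTS)
  (R : (forall i, St (TS i)) -> trel TS -> Prop)
  (s : forall i, St (TS i)) (psi : trel TS) : Prop :=
  forall (ea : forall i : 'I_m, Ev (TS (lshift n i)))
         (sa : forall i : 'I_m, St (TS (lshift n i))),
    (forall i, wstep (s (lshift n i)) (ea i) (sa i)) ->
    exists (eb : forall j : 'I_n, Ev (TS (rshift m j)))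
           (sb : forall j : 'I_n, St (TS (rshift m j))),
      (forall j, wstep (s (rshift m j)) (eb j) (sb j)) /\
      rel_nonempty (deriv (join ea eb) psi) /\
      R (join sa sb) (deriv (join ea eb) psi).

(* hyco^{m,n}: greatest fixed point of hycoF^{m,n}, i.e. (Knaster–Tarski)
   the union of all post-fixed points R ⊆ hycoF^{m,n}(R). *)
Definition hyco (m n : nat) (TS : 'I_(m + n) -> LTS)
  (s : forall i, St (TS i)) (psi : trel TS) : Prop :=
  exists R : (forall i, St (TS i)) -> trel TS -> Prop,
    (forall s' psi', R s' psi' -> hycoF R s' psi') /\ R s psi.

(* A post-fixed point R of hycoF is a winning invariant for the existential
   systems: answering the moves of the given traces of systems 1..m one step at
   a time (dependent choice) keeps R and produces traces of systems m+1..m+n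
   along which every finite derivative of psi is nonempty.  Such a tuple lies
   in the safety closure of psi, hence in psi. *)

From mathcomp Require Import all_boot.
From Stdlib Require Import ClassicalEpsilon FunctionalExtensionality.

Set Implicit Arguments.
Unset Strict Implicit.
Unset Printing Implicit Defensive.

Lemma dependent_choice_fun (I : Type) (A : I -> Type) (P : forall i, A i -> Prop) :
  (forall i, exists x, P i x) -> exists f : forall i, A i, forall i, P i (f i).
Proof.
move=> HP; exists (fun i => proj1_sig (constructive_indefinite_description _ (HP i))).
by move=> i; case: constructive_indefinite_description.
Qed.

Lemma dependent_choice_run (A B : Type) (Inv : nat -> A -> Prop)
    (T : nat -> A -> B -> A -> Prop) (a0 : A) :
  Inv 0 a0 ->
  (forall k a, Inv k a -> exists b a', Inv k.+1 a' /\ T k a b a') ->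
  exists (a : nat -> A) (b : nat -> B),
    a 0 = a0 /\ forall k, Inv k (a k) /\ T k (a k) (b k) (a k.+1).
Proof.
move=> Inv0 HT.
have next k (x : {a | Inv k a}) :
    {p : B * {a | Inv k.+1 a} | T k (proj1_sig x) p.1 (proj1_sig p.2)}.
  apply: constructive_indefinite_description; case: x => a Ia /=.
  by have [b [a' [Ia' Tk]]] := HT k a Ia; exists (b, exist _ a' Ia').
pose run := fix run k : {a | Inv k a} :=
  if k is k'.+1 then (proj1_sig (next k' (run k'))).2 else exist _ a0 Inv0.
exists (fun k => proj1_sig (run k)), (fun k => (proj1_sig (next k (run k))).1).
split=> // k; split; first exact: proj2_sig (run k).
by rewrite /=; case: (next k (run k)).
Qed.

Section Join.

Variables (m n : nat) (F : 'I_(m + n) -> Type).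

Lemma join_lshift a b (i : 'I_m) : join (F := F) a b (lshift n i) = a i.
Proof.
rewrite /join; move: (splitK (lshift n i)).
have : split (lshift n i) = inl i := @unsplitK m n (inl i).
case: (split (lshift n i)) => // u [<-] e.
by rewrite (eq_irrelevance e erefl).
Qed.

Lemma join_rshift a b (j : 'I_n) : join (F := F) a b (rshift m j) = b j.
Proof.
rewrite /join; move: (splitK (rshift m j)).
have : split (rshift m j) = inr j := @unsplitK m n (inr j).
case: (split (rshift m j)) => // u [<-] e.
by rewrite (eq_irrelevance e erefl).
Qed.

Lemma join_eta (f : forall i, F i) :
  join (F := F) (fun i => f (lshift n i)) (fun j => f (rshift m j)) = f.
Proof.
apply: functional_extensionality_dep => i.
by rewrite /join; move: (splitK i); case: (split i) => k e; subst i.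
Qed.

Lemma join_map (G : 'I_(m + n) -> Type) (h : forall i, F i -> G i) a b i :
  h i (join (F := F) a b i) =
  join (F := G) (fun k => h _ (a k)) (fun k => h _ (b k)) i.
Proof. by rewrite /join; move: (splitK i); case: (split i) => k e; subst i. Qed.

End Join.

Section Derivatives.

Variables (k : nat) (TS : 'I_k -> LTS).

Fixpoint derivs (tau : ttuple TS) (N : nat) (psi : trel TS) : trel TS :=
  if N is N'.+1 then deriv (fun i => tau i N') (derivs tau N' psi) else psi.

Lemma rel_nonempty_deriv (e : forall i, Ev (TS i)) (psi : trel TS) :
  rel_nonempty (deriv e psi) -> rel_nonempty psi.
Proof. by case=> tau Htau; exists (fun i => scons (e i) (tau i)). Qed.

Lemma prefix_cat_scons (E : Type) (N : nat) (tau tau' : nat -> E) :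
  prefix_cat N tau (scons (tau N) tau') = prefix_cat N.+1 tau tau'.
Proof.
apply: functional_extensionality => j; rewrite /prefix_cat /scons.
case: (ltngtP j N) => [lt_jN | lt_Nj | ->].
- by rewrite ltnS ltnW.
- by rewrite ltnNge lt_Nj -(subnSK lt_Nj).
- by rewrite subnn ltnSn.
Qed.

Lemma derivs_prefix_cat (tau tau' : ttuple TS) (N : nat) (psi : trel TS) :
  derivs tau N psi tau' -> psi (fun i => prefix_cat N (tau i) (tau' i)).
Proof.
elim: N tau' => [|N IH] tau' /=.
  suff -> : (fun i => prefix_cat 0 (tau i) (tau' i)) = tau' by [].
  apply: functional_extensionality_dep => i.
  by apply: functional_extensionality => j; rewrite /prefix_cat subn0.
move=> /IH; congr psi; apply: functional_extensionality_dep => i.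
exact: prefix_cat_scons.
Qed.

Lemma safety_rel_derivs (psi : trel TS) (tau : ttuple TS) :
  safety_rel psi -> (forall N, rel_nonempty (derivs tau N psi)) -> psi tau.
Proof.
move=> safe_psi nonempty_derivs; apply: safe_psi => N.
have [tau' Htau'] := nonempty_derivs N.
by exists tau'; exact: derivs_prefix_cat.
Qed.

End Derivatives.

Section Game.

Variables (m n : nat) (TS : 'I_(m + n) -> LTS).
Variable R : (forall i, St (TS i)) -> trel TS -> Prop.
Hypothesis R_postfixed : forall s phi, R s phi -> hycoF R s phi.
Variables (ta : forall i : 'I_m, nat -> Ev (TS (lshift n i)))
          (pa : forall i : 'I_m, nat -> St (TS (lshift n i))).
Hypothesis pa_path : forall i k, wstep (pa i k) (ta i k) (pa i k.+1).

Let joint_state k (sb : forall j, St (TS (rshift m j))) :=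
  join (F := fun i => St (TS i)) (fun i => pa i k) sb.

Lemma postfixed_run sb0 psi : R (joint_state 0 sb0) psi ->
  exists (sb : nat -> forall j, St (TS (rshift m j)))
         (eb : nat -> forall j, Ev (TS (rshift m j))) (phi : nat -> trel TS),
    [/\ sb 0 = sb0, phi 0 = psi &
     forall k, [/\ forall j, wstep (sb k j) (eb k j) (sb k.+1 j),
                   rel_nonempty (phi k.+1)
                 & phi k.+1 = deriv (join (fun i => ta i k) (eb k)) (phi k)]].
Proof.
move=> R0.
pose Inv k (x : (forall j, St (TS (rshift m j))) * trel TS) := R (joint_state k x.1) x.2.
pose Move k (x : (forall j, St (TS (rshift m j))) * trel TS) e y :=
  [/\ forall j, wstep (x.1 j) (e j) (y.1 j), rel_nonempty y.2
    & y.2 = deriv (join (fun i => ta i k) e) x.2].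
have answer k x : Inv k x -> exists e y, Inv k.+1 y /\ Move k x e y.
  case: x => sb phi Rk.
  have A_moves i : wstep (joint_state k sb (lshift n i)) (ta i k) (pa i k.+1).
    by rewrite /joint_state join_lshift.
  have [e [sb' [Hw [Hne Rk']]]] := R_postfixed Rk A_moves.
  exists e, (sb', deriv (join (fun i => ta i k) e) phi); split=> //; split=> // j.
  by have := Hw j; rewrite /joint_state join_rshift.
have [run [eb [run0 Hrun]]] := @dependent_choice_run _ _ Inv Move (sb0, psi) R0 answer.
exists (fun k => (run k).1), eb, (fun k => (run k).2).
by split=> [||k]; rewrite ?run0 //; case: (Hrun k).
Qed.

End Game.

Theorem mainTheorem6 (m n : nat) (TS : 'I_(m + n) -> LTS) (psi : trel TS) :
  safety_rel psi ->
  @hyco m n TS (fun i => init (TS i)) psi ->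
  forall ta : forall i : 'I_m, nat -> Ev (TS (lshift n i)),
    (forall i, Traces (init (TS (lshift n i))) (ta i)) ->
    exists tb : forall j : 'I_n, nat -> Ev (TS (rshift m j)),
      (forall j, Traces (init (TS (rshift m j))) (tb j)) /\
      psi (join (F := fun i => nat -> Ev (TS i)) ta tb).
Proof.
move=> safe_psi [R [R_postfixed R_init]] ta Hta.
have [pa Hpa] := dependent_choice_fun Hta.
have R0 : R (join (F := fun i => St (TS i)) (fun i => pa i 0) (fun j => init _)) psi.
  rewrite -(join_eta (fun i => init (TS i))) in R_init.
  by congr R: R_init; congr join; apply: functional_extensionality_dep => i; case: (Hpa i).
have [sb [eb [phi [sb0 phi0 Hrun]]]] :=
  postfixed_run R_postfixed (fun i k => proj2 (Hpa i) k) R0.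
exists (fun j k => eb k j); split.
  move=> j; exists (fun k => sb k j); rewrite sb0; split=> // k.
  by case: (Hrun k).
have phi_derivs N : phi N = derivs (join ta (fun j k => eb k j)) N psi.
  elim: N => [|N IH] //; have [_ _ ->] := Hrun N; rewrite IH /=; f_equal.
  by apply: functional_extensionality_dep => i; rewrite (join_map (fun i f => f N)).
apply: safety_rel_derivs => // N.
apply: (@rel_nonempty_deriv _ _ (join (fun i => ta i N) (eb N))).
by have [_ + next_eq] := Hrun N; rewrite next_eq phi_derivs.
Qed.
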